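(* Let $q=2^f\geq 4$ and $I=\{0,\ f,\ 2f/\gcd(3,f),\ 4f/\gcd(3,f)\}$. Let $b\in\mathbb{F}_{q^2}^\times$ with $b+b^q=1$ and $b^{q+1}\neq 1$, and let $a\in\mathbb{F}_{q^2}^\times$ have order $q+1$ and satisfy: $(1+b+b^2)^{2^i}\neq a+a^{-1}+1$ for all $i\in I$; $(1+b+b^2)^{2^i}\neq a(1+b+b^3+b^4)+a^{-1}(b^2+b^3+b^4)$ for all $i\in I$; $a+a^{-1}+1\neq a(1+b+b^3+b^4)+a^{-1}(b^2+b^3+b^4)$; and $a+a^{-1}+1\neq 0$. Let \[ X=\begin{pmatrix}b&1&1\\ b^q&0&1\\ b^{q+1}&b&b^q\end{pmatrix},\quad Y=\begin{pmatrix}ab+a^{-1}b^q&0&a(b+b^{q+1})+a^{-1}(b^q+b^{q+1})\\ 0&1&0\\ a+a^{-1}&0&ab+a^{-1}b^q\end{pmatrix},\quad Z=\begin{pmatrix}1&0&1\\ 0&1&0\\ 0&0&1\end{pmatrix}. \] Then $\langle X,Y,Z\rangle$ is an irreducible subgroup of $\mathrm{SU}_3(q)$, i.e. it stabilizes no subspace of $\mathbb{F}_{q^2}^3$ of dimension $1$ or $2$.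
   Context: Here $\mathrm{SU}_3(q)=\{A\in\mathrm{SL}_3(q^2): \overline{A}^{T}WA=W\}$, where $\overline{(a_{ij})}=(a_{ij}^q)$ and $W=\begin{pmatrix}0&0&1\\0&1&0\\1&0&0\end{pmatrix}$; matrices act on row vectors in $\mathbb{F}_{q^2}^3$ by right multiplication. *)

From HB Require Import structures.
From mathcomp Require Import all_boot all_order all_algebra all_field.
Set Implicit Arguments. Unset Strict Implicit. Unset Printing Implicit Defensive.
Import GRing.Theory.
Local Open Scope ring_scope.

Definition mx3 (R : Type) (x00 x01 x02 x10 x11 x12 x20 x21 x22 : R) : 'M[R]_3 :=
  \matrix_(i < 3, j < 3)
    match val i, val j with
    | 0, 0 => x00 | 0, 1 => x01 | 0, _ => x02
    | 1, 0 => x10 | 1, 1 => x11 | 1, _ => x12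
    | _, 0 => x20 | _, 1 => x21 | _, _ => x22
    end%N.

Definition Wmx (F : fieldType) : 'M[F]_3 := mx3 0 0 1 0 1 0 1 0 0.

Definition SU3 (F : fieldType) (q : nat) : pred 'M[F]_3 :=
  [pred A | (\det A == 1) &&
    ((map_mx (fun x => x ^+ q) A)^T *m Wmx F *m A == Wmx F)].

Inductive in_gen (F : fieldType) (S : seq 'M[F]_3) : 'M[F]_3 -> Prop :=
  | gen_base g : g \in S -> in_gen S g
  | gen_one : in_gen S 1%:M
  | gen_mul g h : in_gen S g -> in_gen S h -> in_gen S (g *m h)
  | gen_inv g : in_gen S g -> in_gen S (invmx g).

(* g stabilizes the row space of U (vectors act by right multiplication) *)
Definition stabilizes (F : fieldType) (U g : 'M[F]_3) : bool := (U *m g <= U)%MS.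

(* In characteristic 2 the map x |-> x^q is a ring endomorphism of F, so SU_3(q) is a group and
   it suffices to check the generators. Y and Z fix e2 and act on <e1, e3> by a matrix
   [[s, t], [u, s]] of SL_2(q), which preserves the form W in characteristic 2; X is checked
   directly using b^q = 1 + b.
   For irreducibility, Z adds the first coordinate of a vector to its third one, so an invariant
   subspace containing a vector with nonzero first coordinate contains e3, and X or Y turn any
   nonzero vector into such a vector. From e3, Y yields e1 because a + a^-1 != 0 (a has order
   q + 1 > 4), and then X yields e2. *)

From HB Require Import structures.
From mathcomp Require Import all_boot all_order all_algebra all_field.
From mathcomp Require Import ring.
Set Implicit Arguments.
Unset Strict Implicit.
Unset Printing Implicit Defensive.
Import GRing.Theory.
Local Open Scope ring_scope.

Lemma det_mx3 (R : comNzRingType) (x00 x01 x02 x10 x11 x12 x20 x21 x22 : R) :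
  \det (mx3 x00 x01 x02 x10 x11 x12 x20 x21 x22) =
  x00 * (x11 * x22 - x12 * x21) - x01 * (x10 * x22 - x12 * x20)
    + x02 * (x10 * x21 - x11 * x20).
Proof.
rewrite (expand_det_row _ ord0) !big_ord_recr big_ord0 /= add0r.
rewrite /cofactor !(expand_det_row _ ord0) !big_ord_recr !big_ord0 /= !add0r.
by rewrite /cofactor !det_mx11 !mxE /=; ring.
Qed.

Lemma mul_mx3 (R : pzSemiRingType) (x00 x01 x02 x10 x11 x12 x20 x21 x22 : R)
    (y00 y01 y02 y10 y11 y12 y20 y21 y22 : R) :
  mx3 x00 x01 x02 x10 x11 x12 x20 x21 x22 *m mx3 y00 y01 y02 y10 y11 y12 y20 y21 y22 =
  mx3 (x00 * y00 + x01 * y10 + x02 * y20) (x00 * y01 + x01 * y11 + x02 * y21)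
      (x00 * y02 + x01 * y12 + x02 * y22)
      (x10 * y00 + x11 * y10 + x12 * y20) (x10 * y01 + x11 * y11 + x12 * y21)
      (x10 * y02 + x11 * y12 + x12 * y22)
      (x20 * y00 + x21 * y10 + x22 * y20) (x20 * y01 + x21 * y11 + x22 * y21)
      (x20 * y02 + x21 * y12 + x22 * y22).
Proof.
apply/matrixP => i j; rewrite !mxE !big_ord_recr big_ord0 /= add0r !mxE.
by case: i => [[|[|[|i]]] ?] //; case: j => [[|[|[|j]]] ?].
Qed.

Lemma trmx_mx3 (R : Type) (x00 x01 x02 x10 x11 x12 x20 x21 x22 : R) :
  (mx3 x00 x01 x02 x10 x11 x12 x20 x21 x22)^T = mx3 x00 x10 x20 x01 x11 x21 x02 x12 x22.
Proof.
apply/matrixP => i j; rewrite !mxE.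
by case: i => [[|[|[|i]]] ?] //; case: j => [[|[|[|j]]] ?].
Qed.

Lemma map_mx3 (R S : Type) (g : R -> S) (x00 x01 x02 x10 x11 x12 x20 x21 x22 : R) :
  map_mx g (mx3 x00 x01 x02 x10 x11 x12 x20 x21 x22) =
  mx3 (g x00) (g x01) (g x02) (g x10) (g x11) (g x12) (g x20) (g x21) (g x22).
Proof.
apply/matrixP => i j; rewrite !mxE.
by case: i => [[|[|[|i]]] ?] //; case: j => [[|[|[|j]]] ?].
Qed.

Lemma add_mx3 (R : nmodType) (x00 x01 x02 x10 x11 x12 x20 x21 x22 : R)
    (y00 y01 y02 y10 y11 y12 y20 y21 y22 : R) :
  mx3 x00 x01 x02 x10 x11 x12 x20 x21 x22 + mx3 y00 y01 y02 y10 y11 y12 y20 y21 y22 =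
  mx3 (x00 + y00) (x01 + y01) (x02 + y02) (x10 + y10) (x11 + y11) (x12 + y12)
      (x20 + y20) (x21 + y21) (x22 + y22).
Proof.
apply/matrixP => i j; rewrite !mxE.
by case: i => [[|[|[|i]]] ?] //; case: j => [[|[|[|j]]] ?].
Qed.

Lemma scale_mx3 (R : pzSemiRingType) (k x00 x01 x02 x10 x11 x12 x20 x21 x22 : R) :
  k *: mx3 x00 x01 x02 x10 x11 x12 x20 x21 x22 =
  mx3 (k * x00) (k * x01) (k * x02) (k * x10) (k * x11) (k * x12)
      (k * x20) (k * x21) (k * x22).
Proof.
apply/matrixP => i j; rewrite !mxE.
by case: i => [[|[|[|i]]] ?] //; case: j => [[|[|[|j]]] ?].
Qed.

Definition row3 {R : Type} (x y z : R) : 'rV[R]_3 :=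
  \row_(j < 3) match val j with 0 => x | 1 => y | _ => z end%N.

Lemma row3_eta (R : Type) (v : 'rV[R]_3) : v = row3 (v 0 0) (v 0 1) (v 0 2).
Proof.
apply/matrixP => i j; rewrite !mxE (ord1 i).
by case: j => [[|[|[|j]]] ?] //=; congr (v _ _); apply: val_inj.
Qed.

Lemma row3_0 (R : nmodType) : row3 0 0 0 = 0 :> 'rV[R]_3.
Proof. by apply/matrixP => i [[|[|[|j]]] ?]; rewrite !mxE. Qed.

Lemma mul_row3_mx3 (R : pzSemiRingType) (x y z : R)
    (x00 x01 x02 x10 x11 x12 x20 x21 x22 : R) :
  row3 x y z *m mx3 x00 x01 x02 x10 x11 x12 x20 x21 x22 =
  row3 (x * x00 + y * x10 + z * x20) (x * x01 + y * x11 + z * x21)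
       (x * x02 + y * x12 + z * x22).
Proof.
apply/matrixP => i j; rewrite !mxE !big_ord_recr big_ord0 /= add0r !mxE.
by case: j => [[|[|[|j]]] ?].
Qed.

Lemma add_row3 (R : nmodType) (x y z x' y' z' : R) :
  row3 x y z + row3 x' y' z' = row3 (x + x') (y + y') (z + z').
Proof. by apply/matrixP => i [[|[|[|j]]] ?]; rewrite !mxE. Qed.

Lemma scale_row3 (R : pzSemiRingType) (k x y z : R) :
  k *: row3 x y z = row3 (k * x) (k * y) (k * z).
Proof. by apply/matrixP => i [[|[|[|j]]] ?]; rewrite !mxE. Qed.

Lemma stabilizes_sub (F : fieldType) (U g : 'M[F]_3) (v : 'rV[F]_3) :
  stabilizes U g -> (v <= U)%MS -> (v *m g <= U)%MS.
Proof. by move=> Ug vU; apply: submx_trans (submxMr g vU) Ug. Qed.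

Lemma finField_pchar2 (F : finFieldType) (f : nat) :
  #|F| = ((2 ^ f) ^ 2)%N -> 2 \in [pchar F].
Proof. by move=> cardF; apply: (card_finPcharP (n := f * 2)); rewrite // cardF expnM. Qed.

Lemma expr2nD_pchar2 (F : fieldType) (f : nat) :
  2 \in [pchar F] -> {morph (fun x : F => x ^+ (2 ^ f)) : x y / x + y}.
Proof.
by move=> F2 x y; apply: exprDn_pchar; rewrite (eq_pnat _ (pcharf_eq F2)) pnatX pnat_id.
Qed.

Lemma frob_involutive (F : finFieldType) (q : nat) :
  #|F| = (q ^ 2)%N -> involutive (fun x : F => x ^+ q).
Proof. by move=> cardF x; rewrite -exprM mulnn -cardF expf_card. Qed.

Lemma prim_root_exprV (F : fieldType) (n : nat) (a : F) :
  n.+1.-primitive_root a -> a ^+ n = a^-1.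
Proof.
move=> a_prim; have a_neq0 : a != 0 by rewrite (prim_root_eq0 a_prim).
by rewrite -[LHS]mul1r -(mulVf a_neq0) -mulrA -exprS prim_expr_order // mulr1.
Qed.

Lemma prim_root_addrV_neq0 (F : fieldType) (n : nat) (a : F) :
  n.-primitive_root a -> (4 < n)%N -> a + a^-1 != 0.
Proof.
move=> a_prim n_gt4.
have a_neq0 : a != 0 by rewrite (prim_root_eq0 a_prim) -lt0n (ltn_trans _ n_gt4).
apply/eqP => sum0.
have : a * (a + a^-1) = 0 by rewrite sum0 mulr0.
rewrite mulrDr mulfV // -expr2 => /eqP; rewrite addr_eq0 => /eqP a2.
have : (n %| 4)%N by rewrite (prim_order_dvd a_prim) -[4%N]/(2 * 2)%N exprM a2 sqrrN expr1n.
by move/dvdn_leq => /(_ isT); rewrite leqNgt n_gt4.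
Qed.

Section SpecialUnitaryGroup.

Variables (F : fieldType) (q : nat).
Hypotheses (q_gt0 : (0 < q)%N) (F_pchar2 : 2 \in [pchar F]).
Hypothesis frobD : {morph (fun x : F => x ^+ q) : x y / x + y}.

Local Notation frob_mx A := (map_mx (fun x : F => x ^+ q) A).
Local Notation SU3 := (@SU3 F q).

Lemma frob0 : (0 : F) ^+ q = 0.
Proof. by rewrite expr0n gtn_eqF. Qed.

Lemma frob_mxM (A B : 'M[F]_3) : frob_mx (A *m B) = frob_mx A *m frob_mx B.
Proof.
apply/matrixP => i j; rewrite !mxE (big_morph _ frobD frob0).
by apply: eq_bigr => k _; rewrite !mxE exprMn.
Qed.

Lemma frob_mx1 : frob_mx (1%:M : 'M[F]_3) = 1%:M.
Proof. by apply/matrixP => i j; rewrite !mxE; case: (i == j); rewrite ?expr1n ?frob0. Qed.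

Lemma SU3P (A : 'M[F]_3) :
  reflect (\det A = 1 /\ (frob_mx A)^T *m Wmx F *m A = Wmx F) (A \in SU3).
Proof. by apply: (iffP andP) => -[/eqP-> /eqP->]. Qed.

Lemma SU3_1 : 1%:M \in SU3.
Proof. by apply/SU3P; rewrite det1 frob_mx1 trmx1 mul1mx mulmx1. Qed.

Lemma SU3_mul (A B : 'M[F]_3) : A \in SU3 -> B \in SU3 -> A *m B \in SU3.
Proof.
move=> /SU3P[detA unitA] /SU3P[detB unitB]; apply/SU3P; split.
  by rewrite det_mulmx detA detB mulr1.
by rewrite frob_mxM trmx_mul !mulmxA -(mulmxA _ _ (Wmx F)) -(mulmxA _ _ A) unitA.
Qed.

Lemma SU3_inv (A : 'M[F]_3) : A \in SU3 -> invmx A \in SU3.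
Proof.
move=> /SU3P[detA unitA]; have A_unit : A \in unitmx by rewrite unitmxE detA unitr1.
apply/SU3P; split; first by rewrite det_inv detA invr1.
rewrite -{1}unitA !mulmxA -trmx_mul -frob_mxM mulmxV // frob_mx1 trmx1 mul1mx.
by rewrite -mulmxA mulmxV // mulmx1.
Qed.

Lemma in_gen_SU3 (S : seq 'M[F]_3) (g : 'M[F]_3) :
  {subset S <= SU3} -> in_gen S g -> g \in SU3.
Proof.
move=> SU; elim=> {g} [g /SU // | | g h _ ? _ ? | g _ ?]; first exact: SU3_1.
  exact: SU3_mul.
exact: SU3_inv.
Qed.

Lemma mx3_sl2_in_SU3 (s t u : F) :
  s ^+ q = s -> t ^+ q = t -> u ^+ q = u -> s ^+ 2 - t * u = 1 ->
  mx3 s 0 t 0 1 0 u 0 s \in SU3.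
Proof.
move=> sq tq uq det_st; apply/SU3P; split; first by rewrite det_mx3 -[RHS]det_st; ring.
rewrite map_mx3 sq tq uq expr1n frob0 // trmx_mx3 /Wmx !mul_mx3.
(* [ring] cannot use [2 = 0], so the identities are proved over Z with their even parts explicit. *)
transitivity (mx3 (2 * (s * u)) 0 (s ^+ 2 + t * u) 0 1 0 (s ^+ 2 + t * u) 0 (2 * (s * t))).
  by congr mx3; ring.
by rewrite (pcharf0 F_pchar2) !mul0r -(oppr_pchar2 F_pchar2 (t * u)) det_st.
Qed.

Lemma X_in_SU3 (b : F) :
  (b ^+ q) ^+ q = b -> b + b ^+ q = 1 ->
  mx3 b 1 1 (b ^+ q) 0 1 (b ^+ q.+1) b (b ^+ q) \in SU3.
Proof.
move=> bqq bbq; rewrite exprS; set c := b ^+ q in bqq bbq *.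
have cE : c = 1 - b by rewrite -bbq addrC addKr.
apply/SU3P; split.
  transitivity (- (b - c) ^+ 2); first by rewrite det_mx3; ring.
  by rewrite !(oppr_pchar2 F_pchar2) bbq expr1n.
rewrite map_mx3 -/c bqq expr1n frob0 // exprMn -/c bqq trmx_mx3 /Wmx !mul_mx3.
transitivity (Wmx F + 2 *: mx3 (b * c) (b * c) 0 (b * c) 0 c 0 b 1).
  by rewrite /Wmx scale_mx3 add_mx3 cE; congr mx3; ring.
by rewrite (pcharf0 F_pchar2) scale0r addr0.
Qed.

Lemma Y_in_SU3 (a b : F) :
  a != 0 -> a ^+ q = a^-1 -> (b ^+ q) ^+ q = b -> b + b ^+ q = 1 ->
  mx3 (a * b + a^-1 * b ^+ q) 0 (a * (b + b ^+ q.+1) + a^-1 * (b ^+ q + b ^+ q.+1))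
      0 1 0
      (a + a^-1) 0 (a * b + a^-1 * b ^+ q) \in SU3.
Proof.
move=> a_neq0 aq bqq bbq; have aVq : a^-1 ^+ q = a by rewrite exprVn aq invrK.
rewrite exprS; apply: mx3_sl2_in_SU3.
- by rewrite frobD !exprMn aq aVq; ring: bqq.
- by rewrite !(frobD, exprMn) aq aVq; ring: bqq.
- by rewrite frobD aq aVq addrC.
have bqE : b ^+ q = 1 - b by rewrite -bbq addrC addKr.
transitivity (- 1 - 2 * ((a ^+ 2 + a^-1 ^+ 2) * (b * b ^+ q))); first by rewrite bqE; field.
by rewrite (pcharf0 F_pchar2) mul0r subr0 (oppr_pchar2 F_pchar2).
Qed.

Lemma Z_in_SU3 : mx3 1 0 1 0 1 0 0 0 1 \in SU3.
Proof. by apply: mx3_sl2_in_SU3; rewrite ?expr1n ?frob0 ?mulr0 ?subr0. Qed.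

End SpecialUnitaryGroup.

Section Irreducibility.

Variables (F : fieldType) (b c s t u x20 x21 x22 : F) (U : 'M[F]_3).

Local Notation X := (mx3 b 1 1 c 0 1 x20 x21 x22).
Local Notation Y := (mx3 s 0 t 0 1 0 u 0 s).
Local Notation Z := (mx3 1 0 1 0 1 0 0 0 (1 : F)).
Local Notation e1 := (row3 1 0 (0 : F)).
Local Notation e2 := (row3 0 1 (0 : F)).
Local Notation e3 := (row3 0 0 (1 : F)).

Hypotheses (c_neq0 : c != 0) (u_neq0 : u != 0).
Hypotheses (UX : stabilizes U X) (UY : stabilizes U Y) (UZ : stabilizes U Z).

Lemma lincomb_sub (v w : 'rV[F]_3) (k l : F) :
  (v <= U)%MS -> (w <= U)%MS -> ((k *: v + l *: w)%R <= U)%MS.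
Proof. by move=> vU wU; apply: addmx_sub; apply: scalemx_sub. Qed.

Lemma e3_sub (x y z : F) : (row3 x y z <= U)%MS -> x != 0 -> (e3 <= U)%MS.
Proof.
move=> vU x_neq0; have vZU := stabilizes_sub UZ vU.
rewrite (_ : e3 = x^-1 *: (row3 x y z *m Z) + (- x^-1) *: row3 x y z).
  exact: lincomb_sub.
by rewrite mul_row3_mx3 !scale_row3 add_row3; congr row3; field.
Qed.

Lemma e3_sub_of_neq0 : U != 0 -> (e3 <= U)%MS.
Proof.
case/rowV0Pn=> v; rewrite [v]row3_eta; move: (v 0 0) (v 0 1) (v 0 2) => x y z vU v_neq0.
have [x0 | ] := eqVneq x 0; last exact: e3_sub vU.
rewrite {x}x0 in vU v_neq0.
have [z0 | z_neq0] := eqVneq z 0; last first.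
  have := stabilizes_sub UY vU; rewrite mul_row3_mx3 => /e3_sub; apply.
  by rewrite !mul0r mulr0 !add0r mulf_neq0.
rewrite {z}z0 in vU v_neq0.
have y_neq0 : y != 0 by apply: contraNneq v_neq0 => ->; rewrite row3_0.
have := stabilizes_sub UX vU; rewrite mul_row3_mx3 => /e3_sub; apply.
by rewrite !mul0r add0r addr0 mulf_neq0.
Qed.

Lemma e1_sub : (e3 <= U)%MS -> (e1 <= U)%MS.
Proof.
move=> e3U; have e3YU := stabilizes_sub UY e3U.
rewrite (_ : e1 = u^-1 *: (e3 *m Y) + (- (u^-1 * s)) *: e3); first exact: lincomb_sub.
by rewrite mul_row3_mx3 !scale_row3 add_row3; congr row3; field.
Qed.

Lemma e2_sub : (e1 <= U)%MS -> (e3 <= U)%MS -> (e2 <= U)%MS.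
Proof.
move=> e1U e3U; have e1XU := stabilizes_sub UX e1U.
rewrite (_ : e2 = 1 *: (e1 *m X) + (- b) *: e1 + (- 1) *: e3).
  by apply: addmx_sub; [apply: lincomb_sub | apply: scalemx_sub].
by rewrite mul_row3_mx3 !scale_row3 !add_row3; congr row3; ring.
Qed.

Lemma row_full_of_stable : U != 0 -> row_full U.
Proof.
move=> U_neq0; have e3U := e3_sub_of_neq0 U_neq0; have e1U := e1_sub e3U.
have e2U := e2_sub e1U e3U.
rewrite -sub1mx; apply/rV_subP => v _; rewrite [v]row3_eta.
rewrite (_ : row3 _ _ _ = v 0 0 *: e1 + v 0 1 *: e2 + v 0 2 *: e3).
  by apply: addmx_sub; [apply: lincomb_sub | apply: scalemx_sub].
by rewrite !scale_row3 !add_row3; congr row3; ring.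
Qed.

End Irreducibility.

Unset Implicit Arguments.

Theorem lemma3p5 (F : finFieldType) (f : nat) (a b : F) :
  (2 <= f)%N ->
  #|F| = ((2 ^ f) ^ 2)%N ->
  let q := (2 ^ f)%N in
  let I := [:: 0%N; f; (2 * f) %/ gcdn 3 f; (4 * f) %/ gcdn 3 f]%N in
  b != 0 ->
  b + b ^+ q = 1 ->
  b ^+ q.+1 != 1 ->
  a != 0 ->
  (q.+1).-primitive_root a ->
  (forall i, i \in I -> (1 + b + b ^+ 2) ^+ (2 ^ i) != a + a^-1 + 1) ->
  (forall i, i \in I -> (1 + b + b ^+ 2) ^+ (2 ^ i) !=
       a * (1 + b + b ^+ 3 + b ^+ 4) + a^-1 * (b ^+ 2 + b ^+ 3 + b ^+ 4)) ->
  a + a^-1 + 1 != a * (1 + b + b ^+ 3 + b ^+ 4) + a^-1 * (b ^+ 2 + b ^+ 3 + b ^+ 4) ->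
  a + a^-1 + 1 != 0 ->
  let X := mx3 b 1 1
               (b ^+ q) 0 1
               (b ^+ q.+1) b (b ^+ q) in
  let Y := mx3 (a * b + a^-1 * b ^+ q) 0 (a * (b + b ^+ q.+1) + a^-1 * (b ^+ q + b ^+ q.+1))
               0 1 0
               (a + a^-1) 0 (a * b + a^-1 * b ^+ q) in
  let Z := mx3 1 0 1
               0 1 0
               0 0 (1 : F) in
  (forall g, in_gen [:: X; Y; Z] g -> g \in SU3 q) /\
  (forall U : 'M[F]_3, (\rank U = 1 \/ \rank U = 2)%N ->
     ~ (forall g, in_gen [:: X; Y; Z] g -> stabilizes U g)).
Proof.
move=> f_ge2 cardF q _ b_neq0 bbq _ a_neq0 a_prim _ _ _ _ X Y Z.
have F2 := finField_pchar2 cardF.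
have q_gt0 : (0 < q)%N by rewrite expn_gt0.
have frobD := expr2nD_pchar2 f F2.
have bqq : (b ^+ q) ^+ q = b := frob_involutive cardF b.
have aq : a ^+ q = a^-1 := prim_root_exprV a_prim.
split.
  move=> g; apply: (in_gen_SU3 q_gt0 frobD) => A.
  rewrite !inE => /or3P[] /eqP->.
  - exact: X_in_SU3 q_gt0 F2 b bqq bbq.
  - exact: Y_in_SU3 q_gt0 F2 frobD a b a_neq0 aq bqq bbq.
  - exact: Z_in_SU3 q_gt0 F2.
move=> U rkU stabU.
have [UX UY UZ] : [/\ stabilizes U X, stabilizes U Y & stabilizes U Z].
  by split; apply/stabU/gen_base; rewrite !inE eqxx ?orbT.
have q_ge4 : (4 <= q)%N by rewrite -[4%N]/(2 ^ 2)%N leq_exp2l.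
have u_neq0 : a + a^-1 != 0 by apply: prim_root_addrV_neq0 a_prim _.
have U_neq0 : U != 0 by rewrite -mxrank_eq0; case: rkU => ->.
have := row_full_of_stable (expf_neq0 q b_neq0) u_neq0 UX UY UZ U_neq0.
by rewrite /row_full; case: rkU => ->.
Qed.
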